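(* Let $P$ be any transition matrix on the finite set $S$ for which $\pi$ is a stationary distribution, i.e. $\pi(y)=\sum_x\pi(x)P(x,y)$ for all $y$. Let $\pi_{\max}=\max_x\pi(x)$. Then $\mathrm{trace}(P)=\sum_x P(x,x)\ge\max\big(0,(2\pi_{\max}-1)/\pi_{\max}\big)$. Furthermore, any $P$ attaining this minimum value has at most one non-zero diagonal entry, and any such non-zero diagonal entry is $P(x^*,x^* )$ for a state $x^*$ with $\pi(x^* )=\pi_{\max}>1/2$.
   Context: $S$ is a finite set, and $\pi$ is a probability distribution on $S$ with $\pi(x)>0$ for all $x$. A transition matrix has nonnegative entries with rows summing to $1$. *)

From mathcomp Require Import all_boot all_order all_algebra.
Set Implicit Arguments. Unset Strict Implicit. Unset Printing Implicit Defensive.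
Import Order.TTheory GRing.Theory Num.Theory.
Local Open Scope ring_scope.

Definition is_distr (R : realFieldType) (S : finType) (pi : S -> R) : Prop :=
  (forall x, 0 < pi x) /\ \sum_x pi x = 1.

Definition is_transition (R : realFieldType) (S : finType) (P : S -> S -> R) : Prop :=
  (forall x y, 0 <= P x y) /\ (forall x, \sum_y P x y = 1).

Definition is_stationary (R : realFieldType) (S : finType) (pi : S -> R)
  (P : S -> S -> R) : Prop :=
  forall y, pi y = \sum_x pi x * P x y.

(* pi_max = max_x pi(x) (pi is positive, so 0 is a harmless start value) *)
Definition pi_max (R : realFieldType) (S : finType) (pi : S -> R) : R :=
  \big[Num.max/0]_x pi x.

Definition trace (R : realFieldType) (S : finType) (P : S -> S -> R) : R :=
  \sum_x P x x.

From mathcomp Require Import all_boot all_order all_algebra.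
From mathcomp Require Import lra.
Set Implicit Arguments. Unset Strict Implicit. Unset Printing Implicit Defensive.
Import Order.TTheory GRing.Theory Num.Theory.
Local Open Scope ring_scope.

(* Stationarity at y gives pi(y) = pi(y) P(y,y) + sum_{x <> y} pi(x) P(x,y)
   <= pi(y) P(y,y) + (1 - pi(y)), i.e. P(y,y) >= (2 pi(y) - 1) / pi(y).  At a
   state z of maximal mass this is the bound, and the trace dominates
   P(z,z).  If the trace equals max(0, (2 pi_max - 1) / pi_max), it is
   squeezed onto P(z,z), so every other diagonal entry vanishes, and a
   nonzero P(z,z) makes the bound positive, i.e. pi_max > 1/2. *)

Section Trace.
Variables (R : realFieldType) (S : finType) (P : S -> S -> R).
Hypothesis diag_ge0 : forall x, 0 <= P x x.

Lemma trace_ge0 : 0 <= trace P.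
Proof. by apply: sumr_ge0 => x _. Qed.

Lemma diag_le_trace x : P x x <= trace P.
Proof.
by rewrite /trace (bigD1 x) //= lerDl; apply: sumr_ge0 => y _.
Qed.

Lemma trace_eq_diag x : trace P = P x x -> forall y, y != x -> P y y = 0.
Proof.
rewrite /trace (bigD1 x) //= => /eqP; rewrite addrC -subr_eq0 addrK => /eqP.
by apply: psumr_eq0P => y _.
Qed.

End Trace.

Lemma transition_le1 (R : realFieldType) (S : finType) (P : S -> S -> R) x y :
  is_transition P -> P x y <= 1.
Proof.
move=> [P_ge0 P_row]; rewrite -(P_row x) (bigD1 y) //= lerDl.
by apply: sumr_ge0 => z _.
Qed.

Lemma pi_max_attained (R : realFieldType) (S : finType) (pi : S -> R) :
  is_distr pi -> exists x, pi_max pi = pi x.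
Proof.
move=> [pi_gt0 pi_sum].
have [x0 _] : exists x0 : S, true.
  case: (pickP (fun _ : S => true)) => [x0 _ | S_empty]; first by exists x0.
  by move: pi_sum; rewrite big_pred0 // => /eqP; rewrite eq_sym oner_eq0.
have [x _ pi_max_x] := eq_bigmax x0 predT pi isT (fun x _ => ltW (pi_gt0 x)).
by exists x.
Qed.

Lemma stationary_diag_ge (R : realFieldType) (S : finType)
    (pi : S -> R) (P : S -> S -> R) y :
  is_distr pi -> is_transition P -> is_stationary pi P ->
  (2 * pi y - 1) / pi y <= P y y.
Proof.
move=> [pi_gt0 pi_sum] P_trans pi_stat.
have inflow : pi y = pi y * P y y + \sum_(x | x != y) pi x * P x y.
  by rewrite {1}pi_stat (bigD1 y).
have mass_elsewhere : 1 - pi y = \sum_(x | x != y) pi x.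
  by rewrite -pi_sum (bigD1 y) //= addrAC subrr add0r.
have inflow_le : \sum_(x | x != y) pi x * P x y <= 1 - pi y.
  rewrite mass_elsewhere; apply: ler_sum => x _.
  by rewrite ger_pMr // transition_le1.
rewrite ler_pdivrMr // mulrC; lra.
Qed.

Theorem lemma4 (R : realFieldType) (S : finType) (pi : S -> R) (P : S -> S -> R) :
  is_distr pi -> is_transition P -> is_stationary pi P ->
  Num.max 0 ((2 * pi_max pi - 1) / pi_max pi) <= trace P /\
  (trace P = Num.max 0 ((2 * pi_max pi - 1) / pi_max pi) ->
     (forall x y, P x x != 0 -> P y y != 0 -> x = y) /\
     (forall x, P x x != 0 -> pi x = pi_max pi /\ 1 / 2 < pi_max pi)).
Proof.
move=> pi_distr P_trans pi_stat.
have diag_ge0 x : 0 <= P x x by exact: P_trans.1.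
have [xs pi_max_xs] := pi_max_attained pi_distr.
have max_gt0 : 0 < pi_max pi by rewrite pi_max_xs; exact: pi_distr.1.
have bound_le : (2 * pi_max pi - 1) / pi_max pi <= P xs xs.
  by rewrite pi_max_xs; exact: stationary_diag_ge.
split; first by rewrite ge_max trace_ge0 // (le_trans bound_le) ?diag_le_trace.
move=> tr_min.
have tr_xs : trace P = P xs xs.
  by apply/le_anti; rewrite diag_le_trace // {1}tr_min ge_max diag_ge0 bound_le.
have diag_nz x : P x x != 0 -> x = xs /\ 1 / 2 < pi_max pi.
  move=> Pxx_nz; have x_xs : x = xs.
    by apply/eqP; apply: contraNT Pxx_nz => x_ne; rewrite (trace_eq_diag diag_ge0 tr_xs).
  split=> //; have tr_gt0 : 0 < trace P.
    by rewrite tr_xs lt_def -x_xs Pxx_nz diag_ge0.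
  have : 0 < (2 * pi_max pi - 1) / pi_max pi by move: tr_gt0; rewrite tr_min lt_max ltxx.
  rewrite pmulr_lgt0 ?invr_gt0 //; lra.
split; first by move=> x y /diag_nz[-> _] /diag_nz[-> _].
by move=> x /diag_nz[-> half_lt]; split; first rewrite pi_max_xs.
Qed.
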